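(* Let $K$ and $L$ be $n$-element finite sets, $M=K\times L$, and let $u=(u_{kl})_{k\in K,l\in L}$ be a unitary matrix all of whose entries $u_{kl}$ are nonzero. Then the maps $C_u,D_u:F(M)\to\operatorname{End}F(K)$ are unitary isomorphisms of the Hermitian vector spaces $(F(M),\langle\cdot,\cdot\rangle_u)$ and $(\operatorname{End}F(K),\langle\cdot,\cdot\rangle_{HS})$.
   Context: For a finite set $J$, $F(J)$ denotes the space of complex-valued functions on $J$. For $f=(f_{kl})\in F(M)$, $C_uf$ and $D_uf$ are the operators on $F(K)$ whose matrices $(x_{kk'})$ and $(y_{kk'})$ (with respect to the standard basis of delta functions) are $x_{kk'}=\sum_{l\in L}u_{kl}f_{kl}\bar u_{k'l}$ and $y_{kk'}=\sum_{l\in L}u_{kl}f_{k'l}\bar u_{k'l}$. The Hermitian product on $F(M)$ is $\langle f,g\rangle_u=\sum_{k\in K,l\in L}f_{kl}\bar g_{kl}|u_{kl}|^2$, and on $\operatorname{End}F(K)$ the Hilbert–Schmidt product is $\langle X,Y\rangle_{HS}=\operatorname{tr}XY^*=\sum_{k,k'}x_{kk'}\bar y_{kk'}$ where $(x_{kk'}),(y_{kk'})$ are the matrices of $X,Y$. *)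

From HB Require Import structures.
From mathcomp Require Import all_boot all_order all_algebra.
From mathcomp Require Import complex.
Set Implicit Arguments. Unset Strict Implicit. Unset Printing Implicit Defensive.
Import Order.TTheory GRing.Theory Num.Theory.
Local Open Scope ring_scope.

(* Complex numbers: R[i] for a real closed field R (for R the reals, this is C).
   F(J) := {ffun J -> R[i]};  F(M) = {ffun K * L -> R[i]};
   End F(K) is represented by matrices w.r.t. the delta basis: {ffun K * K -> R[i]}. *)

Section Defs.
Variables (R : rcfType) (K L : finType).
Local Notation C := (R[i]).

Definition unitary_mx (u : {ffun K * L -> C}) : Prop :=
  (forall k k' : K, \sum_(l : L) u (k, l) * (u (k', l))^* = (k == k')%:R) /\
  (forall l l' : L, \sum_(k : K) (u (k, l))^* * u (k, l') = (l == l')%:R).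

Definition Cu (u : {ffun K * L -> C}) (f : {ffun K * L -> C}) : {ffun K * K -> C} :=
  [ffun p : K * K => \sum_(l : L) u (p.1, l) * f (p.1, l) * (u (p.2, l))^*].

Definition Du (u : {ffun K * L -> C}) (f : {ffun K * L -> C}) : {ffun K * K -> C} :=
  [ffun p : K * K => \sum_(l : L) u (p.1, l) * f (p.2, l) * (u (p.2, l))^*].

Definition dot_u (u f g : {ffun K * L -> C}) : C :=
  \sum_(k : K) \sum_(l : L) f (k, l) * (g (k, l))^* * `|u (k, l)| ^+ 2.

(* Hilbert-Schmidt product tr X Y^* *)
Definition dot_HS (X Y : {ffun K * K -> C}) : C :=
  \sum_(k : K) \sum_(k' : K) X (k, k') * (Y (k, k'))^*.

Definition unitary_iso (u : {ffun K * L -> C})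
    (T : {ffun K * L -> C} -> {ffun K * K -> C}) : Prop :=
  linear T /\ bijective T /\ (forall f g, dot_HS (T f) (T g) = dot_u u f g).

End Defs.

From HB Require Import structures.
From mathcomp Require Import all_boot all_order all_algebra.
From mathcomp Require Import complex.
From mathcomp Require Import ring.

Set Implicit Arguments.
Unset Strict Implicit.
Unset Printing Implicit Defensive.
Import Order.TTheory GRing.Theory Num.Theory.
Local Open Scope ring_scope.

(* For fixed k the k-th row of C_u f is the vector (u_kl f_kl)_l multiplied by
   u^*, which preserves the standard Hermitian product; summing over k gives
   <C_u f, C_u g>_HS = <f, g>_u.  Its inverse divides by u_kl and multiplies
   back by u.  D_u f is the transpose of C_{conj u} f, and conj u is again
   unitary with the same moduli, so D_u reduces to C_{conj u}. *)

Lemma sum_mul_delta (C : nzRingType) (T : finType) (F : T -> C) (a : T) :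
  \sum_b F b * (a == b)%:R = F a.
Proof.
rewrite (bigD1 a) //= eqxx mulr1 big1 ?addr0 // => b /negbTE.
by rewrite eq_sym => ->; rewrite mulr0.
Qed.

Section ConjTranspose.
Variables (R : rcfType) (K L : finType).
Local Notation C := (R[i]).

Definition conj_ffun (T : finType) (f : {ffun T -> C}) : {ffun T -> C} :=
  [ffun p => (f p)^*].

Definition tr_ffun (X : {ffun K * K -> C}) : {ffun K * K -> C} :=
  [ffun p => X (p.2, p.1)].

Lemma tr_ffunK : involutive tr_ffun.
Proof. by move=> X; apply/ffunP => -[k k']; rewrite !ffunE. Qed.

Lemma tr_ffun_linear : linear tr_ffun.
Proof. by move=> a X Y; apply/ffunP => p; rewrite !ffunE. Qed.

Lemma dot_HS_tr (X Y : {ffun K * K -> C}) :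
  dot_HS (tr_ffun X) (tr_ffun Y) = dot_HS X Y.
Proof.
rewrite /dot_HS exchange_big; apply: eq_bigr => k _.
by apply: eq_bigr => k' _; rewrite !ffunE.
Qed.

Lemma unitary_mx_conj (u : {ffun K * L -> C}) :
  unitary_mx u -> unitary_mx (conj_ffun u).
Proof.
move=> [rows cols]; split=> [k k' | l l'].
- rewrite -[RHS](rmorph_nat Num.conj) -rows rmorph_sum.
  by apply: eq_bigr => l _; rewrite !ffunE rmorphM.
- rewrite -[RHS](rmorph_nat Num.conj) -cols rmorph_sum.
  by apply: eq_bigr => k _; rewrite !ffunE rmorphM.
Qed.

Lemma dot_u_conj (u f g : {ffun K * L -> C}) :
  dot_u (conj_ffun u) f g = dot_u u f g.
Proof.
by apply: eq_bigr => k _; apply: eq_bigr => l _; rewrite ffunE norm_conjC.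
Qed.

Lemma Du_Cu_conj (u : {ffun K * L -> C}) :
  tr_ffun \o Cu (conj_ffun u) =1 Du u.
Proof.
move=> f; apply/ffunP => -[k k']; rewrite !ffunE /=; apply: eq_bigr => l _.
by rewrite !ffunE conjCK; ring.
Qed.

Lemma unitary_iso_tr (u : {ffun K * L -> C})
    (T : {ffun K * L -> C} -> {ffun K * K -> C}) :
  unitary_iso u T -> unitary_iso u (tr_ffun \o T).
Proof.
move=> [linT [bijT isoT]]; split; last split.
- by move=> a f g; rewrite /= linT tr_ffun_linear.
- exact: bij_comp (inv_bij tr_ffunK) bijT.
- by move=> f g; rewrite /= dot_HS_tr.
Qed.

Lemma unitary_iso_conj (u : {ffun K * L -> C})
    (T : {ffun K * L -> C} -> {ffun K * K -> C}) :
  unitary_iso (conj_ffun u) T -> unitary_iso u T.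
Proof.
move=> [linT [bijT isoT]]; do 2 split => //.
by move=> f g; rewrite isoT dot_u_conj.
Qed.

Lemma unitary_iso_eq (u : {ffun K * L -> C})
    (T T' : {ffun K * L -> C} -> {ffun K * K -> C}) :
  T =1 T' -> unitary_iso u T -> unitary_iso u T'.
Proof.
move=> eqT [linT [bijT isoT]]; split; last split.
- by move=> a f g; rewrite -!eqT linT.
- exact: eq_bij bijT _ eqT.
- by move=> f g; rewrite -!eqT isoT.
Qed.

End ConjTranspose.

Section Cu.
Variables (R : rcfType) (K L : finType) (u : {ffun K * L -> R[i]}).
Local Notation C := (R[i]).
Hypothesis u_unitary : unitary_mx u.
Hypothesis u_neq0 : forall k l, u (k, l) != 0.

Lemma adjoint_dot (a b : L -> C) :
  \sum_k (\sum_l a l * (u (k, l))^*) * (\sum_l b l * (u (k, l))^*)^*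
  = \sum_l a l * (b l)^*.
Proof.
transitivity (\sum_l \sum_l' a l * (b l')^* * \sum_k (u (k, l))^* * u (k, l')).
  under eq_bigr do rewrite rmorph_sum mulr_suml.
  under eq_bigr do under eq_bigr do rewrite mulr_sumr.
  rewrite exchange_big /=; apply: eq_bigr => l _.
  rewrite exchange_big /=; apply: eq_bigr => l' _.
  rewrite mulr_sumr; apply: eq_bigr => k _.
  by rewrite rmorphM /= conjCK; ring.
apply: eq_bigr => l _; under eq_bigr do rewrite u_unitary.2.
by rewrite sum_mul_delta.
Qed.

Lemma Cu_isometry f g : dot_HS (Cu u f) (Cu u g) = dot_u u f g.
Proof.
apply: eq_bigr => k _; under eq_bigr do rewrite !ffunE /=.
rewrite (adjoint_dot (fun l => u (k, l) * f (k, l)) (fun l => u (k, l) * g (k, l))).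
by apply: eq_bigr => l _; rewrite rmorphM normCK; ring.
Qed.

Lemma Cu_linear : linear (Cu u).
Proof.
move=> a f g; apply/ffunP => p; rewrite !ffunE scaler_sumr -big_split.
by apply: eq_bigr => l _; rewrite !ffunE /= mulrDr mulrDl -!mulrA mulrCA.
Qed.

Definition Cu_inv (X : {ffun K * K -> C}) : {ffun K * L -> C} :=
  [ffun p => (\sum_k' X (p.1, k') * u (k', p.2)) / u p].

Lemma CuK : cancel (Cu u) Cu_inv.
Proof.
move=> f; apply/ffunP => -[k l]; rewrite !ffunE /=.
under eq_bigr do rewrite ffunE /= mulr_suml.
rewrite exchange_big /=.
under eq_bigr => l' _.
  rewrite (eq_bigr (fun k' => u (k, l') * f (k, l') * ((u (k', l'))^* * u (k', l))));
    last by move=> k' _; rewrite -!mulrA.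
  rewrite -mulr_sumr u_unitary.2.
  over.
rewrite (eq_bigr (fun l' => u (k, l') * f (k, l') * (l == l')%:R)); last first.
  by move=> l' _; rewrite eq_sym.
by rewrite sum_mul_delta mulrC mulKf.
Qed.

Lemma Cu_invK : cancel Cu_inv (Cu u).
Proof.
move=> X; apply/ffunP => -[k k']; rewrite !ffunE /=.
under eq_bigr do rewrite ffunE /= [u (k, _) * _]mulrC divfK // mulr_suml.
rewrite exchange_big /=.
under eq_bigr => k'' _.
  rewrite (eq_bigr (fun l => X (k, k'') * (u (k'', l) * (u (k', l))^*)));
    last by move=> l _; rewrite -!mulrA.
  rewrite -mulr_sumr u_unitary.1.
  over.
rewrite (eq_bigr (fun k'' => X (k, k'') * (k' == k'')%:R)); last first.
  by move=> k'' _; rewrite eq_sym.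
by rewrite sum_mul_delta.
Qed.

Lemma Cu_unitary_iso : unitary_iso u (Cu u).
Proof.
split; first exact: Cu_linear.
by split; [exact: Bijective CuK Cu_invK | exact: Cu_isometry].
Qed.

End Cu.

Theorem proposition2p1 (R : rcfType) (n : nat) (K L : finType)
    (hK : #|K| = n) (hL : #|L| = n) (u : {ffun K * L -> R[i]})
    (hu : unitary_mx u) (hnz : forall k l, u (k, l) != 0) :
  unitary_iso u (Cu u) /\ unitary_iso u (Du u).
Proof.
split; first exact: Cu_unitary_iso.
apply: unitary_iso_eq (Du_Cu_conj u) _.
apply/unitary_iso_tr/unitary_iso_conj/Cu_unitary_iso.
- exact: unitary_mx_conj.
- by move=> k l; rewrite ffunE conjC_eq0.
Qed.
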